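(* $\limsup_{t\to\infty} r_t \leq 2\sqrt{6}-4$.
   Context: Let $t$ be a positive integer (the number of topics). A voter matrix with $t$ topics is a matrix $V\in\{Y,N\}^{n\times t}$ for some positive integer $n$ (rows are voters), subject to the standing assumption that in every column the number of entries $Y$ is at least the number of entries $N$. $\mathcal{V}_t$ is the set of all voter matrices with $t$ topics and any number of voters. A proposal is a vector $p\in\{Y,N\}^t$. A voter $v$ supports $p$ if the Hamming distance between $v$ and $p$ is at most $t/2$; $p$ is supported by $V$ if at least $n/2$ rows of $V$ support $p$. For $i=1,\dots,t$ let $m_i$ be the fraction of entries $Y$ in column $i$ of $V$, and $m_V=\frac1t\sum_i m_i$. For a proposal $p$ let $m_i'=m_i$ if $p_i=Y$ and $m_i'=1-m_i$ if $p_i=N$; set $R_p=\frac1t\sum_i m_i'$ and $r_p=R_p/m_V$. Let $r_V=\max r_p$, the maximum over all proposals $p$ supported by $V$, and $r_t=\inf_{V\in\mathcal{V}_t} r_V$. *)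

From mathcomp Require Import all_boot all_order all_algebra.
From mathcomp Require Import all_classical all_reals all_analysis.
Set Implicit Arguments. Unset Strict Implicit. Unset Printing Implicit Defensive.
Import Order.TTheory GRing.Theory Num.Theory.
Local Open Scope ring_scope.
Local Open Scope classical_set_scope.

(* Entries: true = Y, false = N.  Rows are voters, columns are topics. *)
Section Voting.
Variable R : realType.

Definition colY n t (V : 'M[bool]_(n, t)) (j : 'I_t) : nat := #|[set i | V i j]|.

Definition voter_matrix n t (V : 'M[bool]_(n, t)) : Prop :=
  (0 < n)%N /\ forall j : 'I_t, (#|[set i | ~~ V i j]| <= colY V j)%N.

Definition proposal t := {ffun 'I_t -> bool}.

Definition hamming n t (V : 'M[bool]_(n, t)) (i : 'I_n) (p : proposal t) : nat :=
  #|[set j | V i j != p j]|.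

Definition supports n t (V : 'M[bool]_(n, t)) (i : 'I_n) (p : proposal t) : bool :=
  ((hamming V i p)%:R <= (t%:R / 2 : R)).

Definition supported n t (V : 'M[bool]_(n, t)) (p : proposal t) : bool :=
  ((#|[set i | supports V i p]|)%:R >= (n%:R / 2 : R)).

Definition m_col n t (V : 'M[bool]_(n, t)) (j : 'I_t) : R := (colY V j)%:R / n%:R.

Definition m_V n t (V : 'M[bool]_(n, t)) : R := t%:R^-1 * \sum_(j < t) m_col V j.

Definition m_col' n t (V : 'M[bool]_(n, t)) (p : proposal t) (j : 'I_t) : R :=
  if p j then m_col V j else 1 - m_col V j.

Definition R_p n t (V : 'M[bool]_(n, t)) (p : proposal t) : R :=
  t%:R^-1 * \sum_(j < t) m_col' V p j.

Definition r_p n t (V : 'M[bool]_(n, t)) (p : proposal t) : R := R_p V p / m_V V.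

(* maximum of r_p over supported proposals (a supported proposal always exists,
   and r_p >= 0, so 0 as neutral element is harmless) *)
Definition r_V n t (V : 'M[bool]_(n, t)) : R :=
  \big[Num.max/0]_(p : proposal t | supported V p) r_p V p.

Definition r_t (t : nat) : R :=
  inf [set x : R | exists n (V : 'M[bool]_(n, t)), voter_matrix V /\ x = r_V V].

End Voting.

From mathcomp Require Import all_boot all_order all_algebra.
From mathcomp Require Import all_classical all_reals all_analysis.
From mathcomp Require Import ring lra.
Set Implicit Arguments. Unset Strict Implicit. Unset Printing Implicit Defensive.
Import Order.TTheory GRing.Theory Num.Theory.
Local Open Scope ring_scope.

(* For t = u + 1 topics take 2 * 3^u voters approving every topic and, for
   every ballot f : topics -> {0,1,2}, one voter approving exactly the topics
   j with f j = 0.  Every column has Y-fraction 3/5, so a proposal with Q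
   approvals has r_p = (2t + Q) / (3t).  Over the 3^t ballots, a ballot voter
   agrees with the proposal on (2t - Q) / 3 topics on average, with variance
   at most t.  If 3Q > 2t, supporting the proposal needs a deviation of t/18,
   so by Chebyshev at most 972 * 3^u / t ballot voters support it: together
   with the 2 * 3^u yes-voters this falls short of n/2 = 5 * 3^u / 2 once
   t >= 2000.  Hence r_V <= 8/9 < 2 sqrt 6 - 4 for all large t. *)

Lemma card_classic_set (T : finType) (P : pred T) :
  #|[set x | P x]%classic| = #|P|.
Proof. by apply: eq_card => x; apply/idP/idP; rewrite in_setE. Qed.

Lemma natr_card (R : pzSemiRingType) (T : finType) (P : pred T) :
  #|P|%:R = \sum_x (P x)%:R :> R.
Proof.
rewrite -[#|P|%:R]sumr_const big_mkcond /=.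
by apply: eq_bigr => x _; rewrite unfold_in; case: (P x).
Qed.

Section ProductSums.
Variables (R : comPzRingType) (I A : finType).
Local Notation F := {ffun I -> A}.

Lemma sum_ffun_coord (g : A -> R) (i : I) :
  \sum_(f : F) g (f i) = (\sum_a g a) * #|A|%:R ^+ #|I|.-1.
Proof.
pose G k a := if k == i then g a else 1.
transitivity (\sum_(f : F) \prod_k G k (f k)).
  by apply: eq_bigr => f _; rewrite -big_mkcond big_pred1_eq.
rewrite -bigA_distr_bigA (bigD1 i) //= /G eqxx; congr (_ * _).
rewrite (eq_bigr (fun _ => #|A|%:R)) ?prodr_const ?cardC1 //.
by move=> k /negbTE ->; rewrite sumr_const.
Qed.

Lemma sum_ffun_mul_centered (g h : A -> R) (i k : I) :
  i != k -> \sum_a g a = 0 -> \sum_(f : F) g (f i) * h (f k) = 0.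
Proof.
move=> ik g0.
pose G l a := (if l == i then g a else 1) * (if l == k then h a else 1).
transitivity (\sum_(f : F) \prod_l G l (f l)).
  by apply: eq_bigr => f _; rewrite big_split -!big_mkcond !big_pred1_eq.
rewrite -bigA_distr_bigA (bigD1 i) //= /G eqxx (negbTE ik).
by rewrite (eq_bigr g) ?g0 ?mul0r // => a _; rewrite mulr1.
Qed.

Lemma sum_ffun_sqr_centered (g : I -> A -> R) :
  (forall i, \sum_a g i a = 0) ->
  \sum_(f : F) (\sum_i g i (f i)) ^+ 2 = \sum_i \sum_(f : F) g i (f i) ^+ 2.
Proof.
move=> g0.
transitivity (\sum_(f : F) \sum_i \sum_k g i (f i) * g k (f k)).
  apply: eq_bigr => f _; rewrite expr2 mulr_suml.
  by apply: eq_bigr => i _; rewrite mulr_sumr.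
rewrite exchange_big; apply: eq_bigr => i _ /=.
rewrite exchange_big (bigD1 i) //= [X in _ + X]big1 ?addr0.
  by apply: eq_bigr => f _; rewrite expr2.
by move=> k ki; apply: sum_ffun_mul_centered; rewrite // eq_sym.
Qed.

End ProductSums.

Lemma sum_ffun_sqr_centered_le (R : realDomainType) (I A : finType)
    (g : I -> A -> R) :
  (forall i, \sum_a g i a = 0) -> (forall i a, g i a ^+ 2 <= 1) ->
  \sum_(f : {ffun I -> A}) (\sum_i g i (f i)) ^+ 2
    <= (#|I| * #|{ffun I -> A}|)%:R.
Proof.
move=> g0 g1; rewrite sum_ffun_sqr_centered // natrM mulr_natl -sumr_const.
by apply: ler_sum => i _; rewrite -sumr_const; apply: ler_sum => f _.
Qed.

Lemma card_mul_sqr_le_sum_sqr (R : realDomainType) (T : finType)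
    (P : pred T) (D : T -> R) (c : R) :
  0 <= c -> (forall x, P x -> c <= D x) -> #|P|%:R * c ^+ 2 <= \sum_x D x ^+ 2.
Proof.
move=> c0 PcD; rewrite mulr_natl -sumr_const big_mkcond /=.
apply: ler_sum => x _; rewrite unfold_in; case: ifP => [/PcD cD | _].
  by rewrite !expr2 ler_pM.
exact: sqr_ge0.
Qed.

Lemma limn_esup_le_eventually (R : realType) (u : (\bar R)^nat) (l : \bar R) N :
  (forall n, (N <= n)%N -> (u n <= l)%E) -> (limn_esup u <= l)%E.
Proof.
move=> ul; rewrite limn_esup_lim; apply: lime_le; first exact: is_cvg_esups.
exists N => // m /= Nm; apply: ge_ereal_sup => _ [k /= mk <-].
by apply: ul; apply: leq_trans mk.
Qed.

Definition approvals (R : pzSemiRingType) t (p : proposal t) : R :=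
  \sum_j (p j)%:R.

Lemma sum_proposal_if (R : comPzRingType) t (p : proposal t) (a c : R) :
  \sum_j (if p j then a else c) = t%:R * c + (a - c) * approvals R p.
Proof.
transitivity (\sum_j (c + (a - c) * (p j)%:R)).
  by apply: eq_bigr => j _; case: (p j); rewrite /= ?mulr1 ?mulr0 ?addr0 // addrC subrK.
by rewrite big_split /= sumr_const card_ord mulr_natl mulr_sumr.
Qed.

Section Instance.
Variable u : nat.
Local Notation t := u.+1.
Local Notation ballot := {ffun 'I_t -> 'I_3}.

Definition nyes := (2 * 3 ^ u)%N.
Definition nvoters := (nyes + #|{: ballot}|)%N.

(* Rows [lshift _ i] are the yes-voters, row [rshift nyes (enum_rank f)] is
   the voter of ballot [f]. *)
Definition instance_mx : 'M[bool]_(nvoters, t) :=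
  \matrix_(i, j) match fintype.split i with
                 | inl _ => true
                 | inr k => (enum_val k : ballot) j == ord0
                 end.
Local Notation V := instance_mx.
Local Notation voter f := (rshift nyes (enum_rank f)).

Lemma instance_mx_yes i j : V (lshift _ i) j = true.
Proof. by rewrite mxE -[lshift _ _]/(unsplit (inl i)) unsplitK. Qed.

Lemma instance_mx_ballot (f : ballot) j : V (voter f) j = (f j == ord0).
Proof. by rewrite mxE -[rshift _ _]/(unsplit (inr _)) unsplitK enum_rankK. Qed.

Lemma card_ballot : #|{: ballot}| = (3 * 3 ^ u)%N.
Proof. by rewrite card_ffun !card_ord expnS. Qed.

Lemma nvotersE : nvoters = (5 * 3 ^ u)%N.
Proof. by rewrite /nvoters card_ballot /nyes -mulnDl. Qed.

Variable R : realType.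

Lemma sum_instance_rows (G : 'I_nvoters -> R) :
  \sum_i G i = \sum_(i < nyes) G (lshift _ i) + \sum_(f : ballot) G (voter f).
Proof.
rewrite big_split_ord /=; congr (_ + _).
rewrite (big_enum_val (A := predT) (fun f => G (voter f))) /=.
by apply: eq_bigr => k _; rewrite enum_valK.
Qed.

Lemma sum_ballot_coord (g : 'I_3 -> R) j :
  \sum_(f : ballot) g (f j) = (\sum_a g a) * 3%:R ^+ u.
Proof. by rewrite sum_ffun_coord !card_ord. Qed.

Lemma natr_colY_instance j : (colY V j)%:R = 3 * 3 ^+ u :> R.
Proof.
rewrite /colY card_classic_set natr_card sum_instance_rows.
under eq_bigr do rewrite instance_mx_yes.
under [X in _ + X]eq_bigr do rewrite instance_mx_ballot.
rewrite (sum_ballot_coord (fun a => (a == ord0)%:R)).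
rewrite !big_ord_recl big_ord0 sumr_const card_ord /nyes /=.
by rewrite natrM natrX; ring.
Qed.

Lemma natr_colN_instance j : #|[set i | ~~ V i j]%classic|%:R = 2 * 3 ^+ u :> R.
Proof.
rewrite card_classic_set natr_card sum_instance_rows.
under eq_bigr do rewrite instance_mx_yes.
under [X in _ + X]eq_bigr do rewrite instance_mx_ballot.
rewrite (sum_ballot_coord (fun a => (a != ord0)%:R)).
rewrite !big_ord_recl big_ord0 big1 //=.
by rewrite add0r; ring.
Qed.

Lemma voter_matrix_instance : voter_matrix V.
Proof.
split; first by rewrite nvotersE muln_gt0 expn_gt0.
move=> j; rewrite -(ler_nat R) natr_colN_instance natr_colY_instance.
by rewrite ler_pM2r ?exprn_gt0 // ler_nat.
Qed.

Lemma m_col_instance j : m_col R V j = 3 / 5.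
Proof.
rewrite /m_col natr_colY_instance nvotersE natrM natrX.
by field; rewrite expf_neq0.
Qed.

Lemma r_p_instance p : r_p R V p = (2 * t%:R + approvals R p) / (3 * t%:R).
Proof.
have m_V_instance : m_V R V = 3 / 5.
  rewrite /m_V (eq_bigr (fun _ => 3 / 5)) => [|j _]; last exact: m_col_instance.
  by rewrite sumr_const card_ord -[3 / 5 *+ t]mulr_natr; field; rewrite nat1r pnatr_eq0.
rewrite /r_p m_V_instance /R_p /m_col'.
under eq_bigr do rewrite m_col_instance.
by rewrite sum_proposal_if; field; rewrite nat1r pnatr_eq0.
Qed.

(* agreement of the ballot entry [a] with [p j], centred at its mean over ['I_3] *)
Definition agreement_dev (p : proposal t) j (a : 'I_3) : R :=
  ((a == ord0) == p j)%:R - (if p j then 1 / 3 else 2 / 3).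

Lemma sum_agreement_dev p j : \sum_a agreement_dev p j a = 0.
Proof. by rewrite !big_ord_recl big_ord0 /agreement_dev /=; case: (p j) => /=; lra. Qed.

Lemma agreement_dev_sqr_le1 p j a : agreement_dev p j a ^+ 2 <= 1.
Proof.
rewrite /agreement_dev expr2.
by case: (_ == _); case: (p j) => /=; lra.
Qed.

Lemma sum_agreement_dev_ballot p (f : ballot) :
  \sum_j agreement_dev p j (f j)
  = t%:R - (hamming V (voter f) p)%:R - (2 * t%:R - approvals R p) / 3.
Proof.
rewrite /hamming card_classic_set natr_card /agreement_dev sumrB sum_proposal_if.
have agree j : ((f j == ord0) == p j)%:R = 1 - (V (voter f) j != p j)%:R :> R.
  by rewrite instance_mx_ballot; case: (_ == _); case: (p j); rewrite /= ?subr0 ?subrr.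
rewrite (eq_bigr _ (fun j _ => agree j)) sumrB sumr_const card_ord; lra.
Qed.

Lemma supporting_ballot_dev_ge p (f : ballot) :
  supports R V (voter f) p -> 2 * t%:R < 3 * approvals R p ->
  t%:R / 18 <= \sum_j agreement_dev p j (f j).
Proof. by rewrite /supports sum_agreement_dev_ballot => ? ?; lra. Qed.

Lemma card_supporting_ballots_le p :
  2 * t%:R < 3 * approvals R p ->
  #|[pred f : ballot | supports R V (voter f) p]|%:R * (t%:R / 18) ^+ 2
    <= t%:R * (3 * 3 ^+ u) :> R.
Proof.
move=> many_approvals.
have dev_ge f : f \in [pred f : ballot | supports R V (voter f) p] ->
    t%:R / 18 <= \sum_j agreement_dev p j (f j).
  by move=> supp; apply: supporting_ballot_dev_ge.
apply: le_trans (card_mul_sqr_le_sum_sqr _ dev_ge) _; first by rewrite divr_ge0.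
apply: le_trans (sum_ffun_sqr_centered_le (@sum_agreement_dev p) (@agreement_dev_sqr_le1 p)) _.
by rewrite card_ballot card_ord !natrM natrX.
Qed.

Lemma natr_card_supporters_le p :
  #|[set i | supports R V i p]%classic|%:R
    <= nyes%:R + #|[pred f : ballot | supports R V (voter f) p]|%:R :> R.
Proof.
rewrite card_classic_set !natr_card sum_instance_rows lerD2r.
apply: le_trans (_ : _ <= \sum_(i < nyes) 1) _; last by rewrite sumr_const card_ord.
by apply: ler_sum => i _; case: (supports _ _ _ _); rewrite ?ler01.
Qed.

Lemma supported_instance_approvals_le p :
  (2000 <= t)%N -> supported R V p -> 3 * approvals R p <= 2 * t%:R.
Proof.
move=> t_ge; rewrite /supported => C_ge; rewrite leNgt; apply/negP => many_approvals.
have S_le := card_supporting_ballots_le many_approvals.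
have C_le := natr_card_supporters_le p.
set C : R := #|[set i | supports R V i p]%classic|%:R in C_ge C_le.
set S : R := #|[pred f : ballot | supports R V (voter f) p]|%:R in C_le S_le.
have n_eq : nvoters%:R = 5 * 3 ^+ u :> R by rewrite nvotersE natrM natrX.
have y_eq : nyes%:R = 2 * 3 ^+ u :> R by rewrite natrM natrX.
rewrite n_eq in C_ge; rewrite y_eq in C_le.
have t_ge' : 2000 <= t%:R :> R by rewrite (ler_nat R 2000).
have x_gt0 : 0 < 3 ^+ u :> R by rewrite exprn_gt0.
set x := 3 ^+ u in x_gt0 C_ge C_le S_le.
have S_ge : x / 2 <= S by lra.
have : x / 2 * (t%:R / 18) ^+ 2 <= t%:R * (3 * x).
  by apply: le_trans S_le; rewrite ler_wpM2r ?sqr_ge0.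
rewrite expr2; have tx_gt0 : 0 < t%:R * x by rewrite mulr_gt0 //; lra.
nra.
Qed.

Lemma r_V_instance_le : (2000 <= t)%N -> r_V R V <= 8 / 9.
Proof.
move=> t_ge; apply: bigmax_le => [|p]; first lra.
move=> /(supported_instance_approvals_le t_ge) approvals_le.
by rewrite r_p_instance ler_pdivrMr ?mulr_gt0 ?ltr0n //; lra.
Qed.

End Instance.

Lemma r_t_le (R : realType) t : (2000 <= t)%N -> r_t R t <= 8 / 9.
Proof.
case: t => [//|u] t_ge; apply: le_trans (r_V_instance_le R t_ge).
apply: ge_inf; first by exists 0 => _ [n [W [_ ->]]]; exact: bigmax_ge_id.
by exists (nvoters u), (instance_mx u); split => //; exact: voter_matrix_instance.
Qed.

Lemma eight_ninths_le_sqrt6 (R : rcfType) : 8 / 9 <= 2 * Num.sqrt 6 - 4 :> R.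
Proof.
have := @sqr_sqrtr R 6 ltac:(lra); have := @sqrtr_ge0 R 6.
by rewrite expr2; nra.
Qed.

Theorem theorem5p6 (R : realType) :
  (limn_esup (fun t : nat => ((r_t R t)%:E)) <= (2 * Num.sqrt 6 - 4 : R)%:E)%E.
Proof.
apply: (@limn_esup_le_eventually _ _ _ 2000) => t t_ge.
by rewrite lee_fin (le_trans (r_t_le R t_ge)) ?eight_ninths_le_sqrt6.
Qed.
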